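(* Let $p$ be a prime, $\mathbb{C}_p$ the field of complex $p$-adic numbers with norm $|\cdot|_p$, $a,b,c\in\mathbb{C}_p$ with $b\neq0$, $c\neq ab$, $f(x)=\frac{x+a}{bx+c}$ for $x\neq -c/b$. Fix a square root $\sqrt{(c-1)^2+4ab}$ and let $x_{1}=\frac{1-c+\sqrt{(c-1)^2+4ab}}{2b}$ (a fixed point of $f$). Assume $$\left|\frac{c-ab}{(bx_1+c)^2}\right|_p<1\qquad\text{and}\qquad\left|\frac{b}{bx_1+c}\right|_p<1,$$ and put $\delta_2=\left|\frac{bx_1+c}{b}\right|_p-1$. Then $$\bigcup_{\delta\ge 0,\ \delta\neq 1+\delta_2} S_\delta(x_1)\subset A(x_1).$$
   Context: $S_\delta(x_1)=\{x\in\mathbb{C}_p:|x-x_1|_p=\delta\}$ (so $S_0(x_1)=\{x_1\}$). The basin of attraction of a fixed point $x_0$ is $A(x_0)=\{y\in\mathbb{C}_p: f^n(y)\to x_0 \text{ as } n\to\infty\}$. *)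

From mathcomp Require Import all_boot all_order all_algebra.
From mathcomp Require Import reals.
Set Implicit Arguments. Unset Strict Implicit. Unset Printing Implicit Defensive.
Import Order.TTheory GRing.Theory Num.Theory.
Local Open Scope ring_scope.

(* A model of the complex p-adic numbers C_p: an algebraically closed field K
   with a real-valued absolute value nrm which is non-archimedean, normalized
   by |p| = 1/p (so it restricts to the p-adic absolute value on Q), complete,
   of characteristic 0, and in which the algebraic closure of Q is dense.
   These properties characterize C_p (= completion of the algebraic closure of
   Q_p) up to isometric isomorphism. *)

Definition cauchy_seq (R : realType) (K : fieldType) (nrm : K -> R)
  (u : nat -> K) : Prop :=
  forall eps : R, 0 < eps -> exists N : nat,
    forall m n : nat, (N <= m)%N -> (N <= n)%N -> nrm (u m - u n) < eps.

Definition seq_cvg_to (R : realType) (K : fieldType) (nrm : K -> R)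
  (u : nat -> K) (l : K) : Prop :=
  forall eps : R, 0 < eps -> exists N : nat,
    forall n : nat, (N <= n)%N -> nrm (u n - l) < eps.

Definition algebraic_over_Q (K : fieldType) (y : K) : Prop :=
  exists q : {poly rat}, q != 0 /\ root (map_poly ratr q) y.

Definition is_Cp (p : nat) (R : realType) (K : closedFieldType) (nrm : K -> R)
  : Prop :=
  (forall x : K, nrm x = 0 <-> x = 0) /\
      (forall x y : K, nrm (x * y) = nrm x * nrm y) /\
      (forall x y : K, nrm (x + y) <= Num.max (nrm x) (nrm y)) /\
      nrm (p%:R) = (p%:R)^-1 /\
      ([pchar K] =i pred0) /\
      (forall u : nat -> K, cauchy_seq nrm u -> exists l : K, seq_cvg_to nrm u l) /\
    (forall (x : K) (eps : R), 0 < eps ->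
         exists y : K, algebraic_over_Q y /\ nrm (x - y) < eps).

Definition mobius (K : fieldType) (a b c : K) (x : K) : K := (x + a) / (b * x + c).

Definition basin (R : realType) (K : fieldType) (nrm : K -> R) (a b c x0 y : K)
  : Prop :=
  (forall n : nat, b * iter n (mobius a b c) y + c != 0) /\
  seq_cvg_to nrm (fun n => iter n (mobius a b c) y) x0.

(* The root x1 is a fixed point of f with multiplier lambda = (c - ab)/(bx1 + c)^2,
   and f y - x1 = (c - ab)/(bx1 + c) * (y - x1)/(by + c).  With r = |bx1 + c|/|b|
   = 1 + delta2, the ultrametric inequality gives |by + c| = |bx1 + c| on the open
   disc |y - x1| < r, where f therefore multiplies the distance to x1 by
   |lambda| < 1; outside the closed disc |by + c| = |b| |y - x1|, and f sends y
   into the open disc in one step.  Only the sphere of radius r, which contains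
   the pole -c/b, is left out. *)

From mathcomp Require Import all_boot all_order all_algebra.
From mathcomp Require Import reals topology normedtype sequences.
From mathcomp Require Import ring.
Import Order.TTheory GRing.Theory Num.Theory numFieldNormedType.Exports.
Local Open Scope ring_scope.
Local Open Scope classical_set_scope.
Set Implicit Arguments. Unset Strict Implicit.

Lemma seq_cvg_to_geometric (R : realType) (K : fieldType) (nrm : K -> R)
    (u : nat -> K) (l : K) (C q : R) :
  0 <= q < 1 -> (forall n, nrm (u n - l) <= C * q ^+ n) -> seq_cvg_to nrm u l.
Proof.
move=> /andP[q_ge0 q_lt1] le_u eps eps_gt0.
have /cvgrPdist_lt/(_ eps eps_gt0) [N _ HN] : geometric C q @ \oo --> 0.
  by apply: cvg_geometric; rewrite ger0_norm.
exists N => n le_Nn; apply: le_lt_trans (le_u n) _.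
by apply: le_lt_trans (HN n le_Nn); rewrite sub0r normrN ler_norm.
Qed.

Lemma nrm_ge0_closed (R : realDomainType) (K : closedFieldType) (nrm : K -> R) :
  (forall x y, nrm (x * y) = nrm x * nrm y) -> forall x, 0 <= nrm x.
Proof.
move=> nrmM x.
have [y] := @solve_monicpoly K 2 (fun i => if i == 0%N then x else 0) isT.
rewrite big_ord_recl big_ord1 /= expr0 mulr1 mul0r addr0 => <-.
by rewrite expr2 nrmM -expr2 sqr_ge0.
Qed.

Lemma quadratic_root_mobius_fixed (K : fieldType) (a b c s : K) :
  2 != 0 :> K -> b != 0 -> s ^+ 2 = (c - 1) ^+ 2 + 4 * a * b ->
  let x1 := (1 - c + s) / (2 * b) in x1 + a = x1 * (b * x1 + c).
Proof.
move=> two_neq0 b_neq0 s2 x1.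
have four_b_neq0 : 4 * b != 0.
  have -> : 4 = 2 * 2 :> K by ring.
  by rewrite !mulf_neq0.
apply/eqP; rewrite eq_sym -subr_eq0 -(mulrI_eq0 _ (lregP four_b_neq0)).
have -> : 4 * b * (x1 * (b * x1 + c) - (x1 + a))
          = s ^+ 2 - (c - 1) ^+ 2 - 4 * a * b.
  by rewrite /x1; field; rewrite b_neq0 two_neq0.
by rewrite s2; apply/eqP; ring.
Qed.

Lemma basin_mobius_pred (R : realType) (K : fieldType) (nrm : K -> R)
    (a b c x0 y : K) :
  b * y + c != 0 -> basin nrm a b c x0 (mobius a b c y) -> basin nrm a b c x0 y.
Proof.
move=> y_dom [fy_dom fy_cvg]; split=> [[|n]|eps /fy_cvg[N HN]] //.
  by rewrite iterSr.
by exists N.+1 => -[|n] // le_Nn; rewrite iterSr; apply: HN.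
Qed.

Section UltrametricAbsoluteValue.
Variables (R : realType) (K : fieldType) (nrm : K -> R).
Hypothesis nrm0_iff : forall x, nrm x = 0 <-> x = 0.
Hypothesis nrmM : forall x y, nrm (x * y) = nrm x * nrm y.
Hypothesis nrmD : forall x y, nrm (x + y) <= Num.max (nrm x) (nrm y).
Hypothesis nrm_ge0 : forall x, 0 <= nrm x.

Lemma nrm0 : nrm 0 = 0.
Proof. exact/nrm0_iff. Qed.

Lemma nrm_eq0 x : (nrm x == 0) = (x == 0).
Proof. by apply/eqP/eqP => [/nrm0_iff|->] //; rewrite nrm0. Qed.

Lemma nrm_gt0 x : (0 < nrm x) = (x != 0).
Proof. by rewrite lt0r nrm_ge0 andbT nrm_eq0. Qed.

Lemma nrm1 : nrm 1 = 1.
Proof.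
have nrm1_neq0 : nrm 1 != 0 by rewrite nrm_eq0 oner_neq0.
by apply: (mulfI nrm1_neq0); rewrite -nrmM !mulr1.
Qed.

Lemma nrmN x : nrm (- x) = nrm x.
Proof.
have : nrm (-1) ^+ 2 == 1 by rewrite expr2 -nrmM mulrNN mulr1 nrm1.
rewrite sqrf_eq1 => /orP[/eqP nrmN1|/eqP nrmN1].
  by rewrite -mulN1r nrmM nrmN1 mul1r.
by have := nrm_ge0 (-1); rewrite nrmN1 ler0N1.
Qed.

Lemma nrmV x : nrm x^-1 = (nrm x)^-1.
Proof.
have [->|x_neq0] := eqVneq x 0; first by rewrite invr0 nrm0 invr0.
have nx_neq0 : nrm x != 0 by rewrite nrm_eq0.
by apply: (mulfI nx_neq0); rewrite -nrmM !divff // nrm1.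
Qed.

Lemma nrmD_eql x y : nrm y < nrm x -> nrm (x + y) = nrm x.
Proof.
move=> lt_yx; apply/eqP; rewrite eq_le.
have := nrmD x y; rewrite (max_idPl (ltW lt_yx)) => -> /=.
have := nrmD (x + y) (- y); rewrite addrK nrmN.
case: (leP (nrm (x + y)) (nrm y)) => // _ le_x_y.
by have := lt_le_trans lt_yx le_x_y; rewrite ltxx.
Qed.

Section MobiusNearFixedPoint.
Variables a b c x1 : K.
Hypothesis c_neq_ab : c != a * b.
Hypothesis x1_fixed : x1 + a = x1 * (b * x1 + c).

Local Notation f := (mobius a b c).
Local Notation A := (b * x1 + c).
Local Notation lambda := (nrm ((c - a * b) / A ^+ 2)).
Hypothesis lambda_lt1 : lambda < 1.

Lemma mobius_fixed_denom_neq0 : A != 0.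
Proof.
apply: contra_neq c_neq_ab => A0.
have x1E : x1 = - a by apply/eqP; rewrite -subr_eq0 opprK x1_fixed A0 mulr0.
by apply/eqP; rewrite -subr_eq0 -A0 x1E; apply/eqP; ring.
Qed.

Lemma mobius_subr_fixed y : b * y + c != 0 ->
  f y - x1 = (c - a * b) / A * (y - x1) / (b * y + c).
Proof.
have aE : a = x1 * A - x1 by rewrite -x1_fixed addrC addKr.
move=> y_dom; rewrite /mobius aE; field.
by rewrite y_dom mobius_fixed_denom_neq0.
Qed.

Lemma nrm_mobius_subr_fixed y : b * y + c != 0 ->
  nrm (f y - x1) = lambda * nrm A * nrm (y - x1) / nrm (b * y + c).
Proof.
move=> y_dom; rewrite mobius_subr_fixed // !(expr2, nrmM, nrmV).
have nA_neq0 : nrm A != 0 by rewrite nrm_eq0 mobius_fixed_denom_neq0.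
by field; rewrite nA_neq0 nrm_eq0 y_dom.
Qed.

Lemma nrm_mobius_denom_inner y :
  nrm b * nrm (y - x1) < nrm A -> nrm (b * y + c) = nrm A.
Proof.
move=> y_in; have -> : b * y + c = A + b * (y - x1) by ring.
by apply: nrmD_eql; rewrite nrmM.
Qed.

Lemma nrm_mobius_denom_outer y :
  nrm A < nrm b * nrm (y - x1) -> nrm (b * y + c) = nrm b * nrm (y - x1).
Proof.
move=> y_out; have -> : b * y + c = b * (y - x1) + A by ring.
by rewrite nrmD_eql ?nrmM.
Qed.

Lemma mobius_denom_neq0 y : nrm b * nrm (y - x1) != nrm A -> b * y + c != 0.
Proof.
have nA_gt0 : 0 < nrm A by rewrite nrm_gt0 mobius_fixed_denom_neq0.
rewrite -nrm_gt0.
case: (ltgtP (nrm b * nrm (y - x1)) (nrm A)) => // [y_in|y_out] _.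
  by rewrite (nrm_mobius_denom_inner y_in).
by rewrite (nrm_mobius_denom_outer y_out) (lt_trans nA_gt0).
Qed.

Lemma mobius_contract_inner y : nrm b * nrm (y - x1) < nrm A ->
  nrm (f y - x1) = lambda * nrm (y - x1).
Proof.
move=> y_in; rewrite nrm_mobius_subr_fixed ?mobius_denom_neq0 ?lt_eqF //.
rewrite (nrm_mobius_denom_inner y_in) mulrAC mulfK //.
by rewrite nrm_eq0 mobius_fixed_denom_neq0.
Qed.

Lemma mobius_outer_to_inner y : nrm A < nrm b * nrm (y - x1) ->
  nrm b * nrm (f y - x1) < nrm A.
Proof.
move=> y_out; have y_dom : b * y + c != 0 by rewrite mobius_denom_neq0 ?gt_eqF.
have : nrm b * nrm (y - x1) != 0.
  by rewrite -(nrm_mobius_denom_outer y_out) nrm_eq0.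
rewrite mulf_eq0 negb_or => /andP[nb_neq0 nd_neq0].
rewrite nrm_mobius_subr_fixed // (nrm_mobius_denom_outer y_out).
have -> : nrm b * (lambda * nrm A * nrm (y - x1) / (nrm b * nrm (y - x1)))
          = lambda * nrm A by field; rewrite nb_neq0 nd_neq0.
by rewrite gtr_pMl // nrm_gt0 mobius_fixed_denom_neq0.
Qed.

Lemma iter_mobius_inner y : nrm b * nrm (y - x1) < nrm A -> forall n,
  nrm b * nrm (iter n f y - x1) < nrm A /\
  nrm (iter n f y - x1) = lambda ^+ n * nrm (y - x1).
Proof.
move=> y_in; elim=> [|n [yn_in ynE]]; first by rewrite expr0 mul1r.
rewrite iterS mobius_contract_inner //; split; last by rewrite ynE mulrA -exprS.
by apply: le_lt_trans yn_in; rewrite ler_wpM2l // ler_piMl // ltW.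
Qed.

Lemma basin_inner y : nrm b * nrm (y - x1) < nrm A -> basin nrm a b c x1 y.
Proof.
move=> y_in; have yn := iter_mobius_inner y_in; split.
  by move=> n; rewrite mobius_denom_neq0 // lt_eqF; case: (yn n).
apply: (seq_cvg_to_geometric (C := nrm (y - x1)) (q := lambda)).
  by rewrite nrm_ge0 lambda_lt1.
by move=> n; case: (yn n) => _ ->; rewrite mulrC.
Qed.

Lemma basin_off_critical_sphere y :
  nrm b * nrm (y - x1) != nrm A -> basin nrm a b c x1 y.
Proof.
case: (ltgtP (nrm b * nrm (y - x1)) (nrm A)) => // [/basin_inner //|y_out] _.
apply: basin_mobius_pred; first by rewrite mobius_denom_neq0 ?gt_eqF.
exact/basin_inner/mobius_outer_to_inner.
Qed.

End MobiusNearFixedPoint.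

End UltrametricAbsoluteValue.

Theorem theorem3p7 (p : nat) (R : realType) (K : closedFieldType) (nrm : K -> R)
  (hp : prime p) (hK : is_Cp p nrm)
  (a b c s : K) (hb : b != 0) (hc : c != a * b)
  (hs : s ^+ 2 = (c - 1) ^+ 2 + 4 * a * b) :
  let x1 := (1 - c + s) / (2 * b) in
  nrm ((c - a * b) / (b * x1 + c) ^+ 2) < 1 ->
  nrm (b / (b * x1 + c)) < 1 ->
  let delta2 := nrm ((b * x1 + c) / b) - 1 in
  forall (delta : R), 0 <= delta -> delta != 1 + delta2 ->
  forall x : K, nrm (x - x1) = delta -> basin nrm a b c x1 x.
Proof.
move: hK => [nrm0_iff [nrmM [nrmD [_ [/pcharf0P char0 _]]]]].
move=> x1 lambda_lt1 _ delta2 delta _ delta_neq x x_delta.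
have nrm_ge0 := nrm_ge0_closed nrmM.
have x1_fixed : x1 + a = x1 * (b * x1 + c).
  by apply: quadratic_root_mobius_fixed; rewrite ?char0.
apply: basin_off_critical_sphere => //; rewrite x_delta.
apply: contra_neq delta_neq => nb_delta.
rewrite /delta2 addrC subrK nrmM (nrmV nrm0_iff nrmM) -nb_delta mulrAC.
by rewrite divff ?mul1r // (nrm_eq0 nrm0_iff).
Qed.
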